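(* Consider the structured non-smooth problem described in the context and let $R_0\ge\|x^0-x^*\|$. (a) If $\alpha=0$ and the non-smooth DRAO method is run with $w_t=1$, $\theta_t=1$, $\eta_t=M_AD_\Pi/R_0$, $\tau_t=M_AR_0/D_\Pi$, then its output satisfies $f(\bar x^N)-f(x^* )\le M_AD_\Pi R_0/N$. (b) If $\alpha>0$ and the non-smooth DRAO method is run with $w_t=t$, $\theta_t=(t-1)/t$, $\eta_t=t\alpha/3$, $\tau_t=3M_A^2/(t\alpha)$, then its output satisfies $f(\bar x^N)-f(x^* )\le\big(\alpha\|x^0-x^*\|^2/3+3M_A^2D_\Pi^2/\alpha\big)/N^2$.
   Context: Let $X\subseteq\mathbb{R}^n$ be closed convex, $P\subseteq\Delta_m^+=\{p\in\mathbb{R}^m:\sum_ip_i=1,p\ge0\}$ closed convex, $\rho^*$ proper closed convex on $P$, $u$ proper closed convex and $\alpha$-strongly convex with $\alpha\ge0$ ($\alpha=0$ meaning merely convex). Structured non-smooth setting: for $i\in[m]$, $A_i\in\mathbb{R}^{m_i\times n}$, $\Pi_i\subseteq\mathbb{R}^{m_i}$ is closed, convex and bounded, $f_i^*$ is proper closed convex, and $f_i(x)=\max_{\pi_i\in\Pi_i}\langle A_ix,\pi_i\rangle-f_i^*(\pi_i)$. The problem is $\min_{x\in X}\{f(x):=\max_{p\in P}\sum_ip_if_i(x)-\rho^*(p)+u(x)\}$ with nonempty optimal set and optimal solution $x^*$. Let $M_A=\max_i\|A_i\|_{2,2}$ and $D_\Pi=\max_i\max_{\pi_i,\bar\pi_i\in\Pi_i}\|\pi_i-\bar\pi_i\|$.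 Non-smooth DRAO method: given $x^0\in X$, $\pi_i^0\in\Pi_i$, set $x^{-1}=x^0$. For $t=1,\dots,N$: $\tilde x^t=x^{t-1}+\theta_t(x^{t-1}-x^{t-2})$; $\pi_i^t=\arg\max_{\pi_i\in\Pi_i}\langle A_i\tilde x^t,\pi_i\rangle-f_i^*(\pi_i)-\frac{\tau_t}{2}\|\pi_i-\pi_i^{t-1}\|^2$; $v_i^t=A_i^\top\pi_i^t$; $x^t=\arg\min_{x\in X}\max_{p\in P}\sum_ip_i(\langle x,v_i^t\rangle-f_i^*(\pi_i^t))-\rho^*(p)+u(x)+\frac{\eta_t}{2}\|x-x^{t-1}\|^2$. Output $\bar x^N=\sum_{t=1}^Nw_tx^t/\sum_{t=1}^Nw_t$. *)

From HB Require Import structures.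
From mathcomp Require Import all_boot all_order all_algebra.
From mathcomp Require Import all_classical all_reals all_analysis.
Set Implicit Arguments. Unset Strict Implicit. Unset Printing Implicit Defensive.
Import Order.TTheory GRing.Theory Num.Theory.
Import numFieldNormedType.Exports.
Local Open Scope classical_set_scope.
Local Open Scope ring_scope.

Section Defs.
Variable R : realType.

Definition dotv k (u v : 'cV[R]_k) : R := \sum_(i < k) u i 0 * v i 0.
Definition norm2 k (u : 'cV[R]_k) : R := Num.sqrt (dotv u u).

Definition opnorm p q (A : 'M[R]_(p, q)) : R :=
  sup [set norm2 (A *m x) | x in [set x : 'cV[R]_q | norm2 x <= 1]].

Definition diam k (S : set 'cV[R]_k) : R :=
  sup [set r | exists a b, S a /\ S b /\ r = norm2 (a - b)].

Definition bounded_set2 k (S : set 'cV[R]_k) : Prop :=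
  exists M : R, forall x, S x -> norm2 x <= M.

Definition simplex m : set 'cV[R]_m :=
  [set p | (forall i, 0 <= p i 0) /\ \sum_(i < m) p i 0 = 1].

Definition proper_fun k (g : 'cV[R]_k -> \bar R) : Prop :=
  (forall x, g x != -oo%E) /\ (exists x, g x \is a fin_num).

Definition closed_fun k (g : 'cV[R]_k -> \bar R) : Prop :=
  closed [set xr : 'cV[R]_k * R | (g xr.1 <= xr.2%:E)%E].

Definition convex_fun k (g : 'cV[R]_k -> \bar R) : Prop :=
  forall (x y : 'cV[R]_k) (t : R), 0 < t < 1 ->
    (g (t *: x + (1 - t) *: y)%R <= t%:E * g x + (1 - t)%:E * g y)%E.

Definition pcc k (g : 'cV[R]_k -> \bar R) : Prop :=
  [/\ proper_fun g, closed_fun g & convex_fun g].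

Definition restrict_fun k (S : set 'cV[R]_k) (g : 'cV[R]_k -> \bar R) :=
  fun x => if `[< S x >] then g x else +oo%E.

Definition strongly_convex k (alpha : R) (g : 'cV[R]_k -> \bar R) : Prop :=
  convex_fun (fun x => (g x - ((alpha / 2) * norm2 x ^+ 2)%:E)%E).

Definition fi mi n (A : 'M[R]_(mi, n)) (Pi : set 'cV[R]_mi)
    (fstar : 'cV[R]_mi -> \bar R) (x : 'cV[R]_n) : \bar R :=
  ereal_sup [set ((dotv (A *m x) q)%:E - fstar q)%E | q in Pi].

Definition fobj m (mi : 'I_m -> nat) n (A : forall i, 'M[R]_(mi i, n))
    (Pi : forall i, set 'cV[R]_(mi i)) (fstar : forall i, 'cV[R]_(mi i) -> \bar R)
    (P : set 'cV[R]_m) (rho : 'cV[R]_m -> \bar R) (u : 'cV[R]_n -> \bar R)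
    (x : 'cV[R]_n) : \bar R :=
  (ereal_sup [set (\sum_(i < m) (p i 0)%:E * fi (A i) (Pi i) (fstar i) x - rho p)%E
              | p in P] + u x)%E.

(* Non-smooth DRAO: the sequences x (x 0 = x^0, x^{-1} = x^0) and pi
   (pi 0 = pi^0) satisfy the update rules for t = 1..N. *)
Definition DRAO_ns m (mi : 'I_m -> nat) n (X : set 'cV[R]_n)
    (A : forall i, 'M[R]_(mi i, n))
    (Pi : forall i, set 'cV[R]_(mi i)) (fstar : forall i, 'cV[R]_(mi i) -> \bar R)
    (P : set 'cV[R]_m) (rho : 'cV[R]_m -> \bar R) (u : 'cV[R]_n -> \bar R)
    (theta eta tau : nat -> R) (N : nat)
    (x : nat -> 'cV[R]_n) (pi : nat -> forall i, 'cV[R]_(mi i)) : Prop :=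
  [/\ X (x 0%N), (forall i, Pi i (pi 0%N i)) &
   forall t : nat, (1 <= t <= N)%N ->
     let xt := x t.-1 + theta t *: (x t.-1 - x t.-2) in
     let phi i (q : 'cV[R]_(mi i)) :=
       ((dotv (A i *m xt) q)%:E - fstar i q
        - ((tau t / 2) * norm2 (q - pi t.-1 i) ^+ 2)%:E)%E in
     let v i := (A i)^T *m pi t i in
     let psi (y : 'cV[R]_n) :=
       (ereal_sup [set (\sum_(i < m) (p i 0)%:E * ((dotv y (v i))%:E - fstar i (pi t i))
                        - rho p)%E | p in P]
        + u y + ((eta t / 2) * norm2 (y - x t.-1) ^+ 2)%:E)%E in
     [/\ (forall i, Pi i (pi t i) /\ forall q, Pi i q -> (phi i q <= phi i (pi t i))%E),
         X (x t) &
         forall y, X y -> (psi (x t) <= psi y)%E]].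

Definition xbar n (w : nat -> R) (x : nat -> 'cV[R]_n) (N : nat) : 'cV[R]_n :=
  (\sum_(1 <= t < N.+1) w t)^-1 *: \sum_(1 <= t < N.+1) w t *: x t.

End Defs.

From HB Require Import structures.
From mathcomp Require Import all_boot all_order all_algebra.
From mathcomp Require Import all_classical all_reals all_analysis.
From mathcomp Require Import ring lra zify.
Set Implicit Arguments. Unset Strict Implicit. Unset Printing Implicit Defensive.
Import Order.TTheory GRing.Theory Num.Theory.
Import numFieldNormedType.Exports.
Local Open Scope classical_set_scope.
Local Open Scope ring_scope.

(* Each dual update is a proximal step for the convex [f_i^*] and each primal update
   a proximal step for the [alpha]-strongly convex function "maximum over [p] of the
   linearised objective, plus [u]"; both satisfy a three-point inequality, because a
   strongly convex function grows quadratically away from its minimiser over a convex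
   set.  Weight step [t] by [w_t] and sum.  When [w_t theta_t = w_{t-1}], the
   extrapolation [x~^t] makes the coupling terms [<A_i (x^t - x^{t-1}), q - pi^t>]
   telescope, and the leftover cross terms are absorbed by Young's inequality as soon
   as [w_t tau_t] is a constant [c] with [w_t M_A^2 <= eta_t c].  This bounds the dual
   regret, uniformly in [q], by [c/2 D_Pi^2] plus the weighted primal movement, which
   the primal three-point inequalities pay for; they telescope to
   [w_1 eta_1/2 ||x^0 - x^*||^2] when [w_{t+1} eta_{t+1} <= w_t (eta_t + alpha)].
   Jensen's inequality for the weighted average turns the regret into the optimality
   gap. *)

(** * Euclidean geometry of column vectors *)

Section Euclidean.
Variable R : realType.
Implicit Types (k : nat).

Lemma dotvC k (u v : 'cV[R]_k) : dotv u v = dotv v u.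
Proof. by apply: eq_bigr => i _; rewrite mulrC. Qed.

Lemma dotvDl k (u w v : 'cV[R]_k) : dotv (u + w) v = dotv u v + dotv w v.
Proof. by rewrite /dotv -big_split; apply: eq_bigr => i _; rewrite !mxE mulrDl. Qed.

Lemma dotvZl k (c : R) (u v : 'cV[R]_k) : dotv (c *: u) v = c * dotv u v.
Proof. by rewrite /dotv mulr_sumr; apply: eq_bigr => i _; rewrite !mxE mulrA. Qed.

Lemma dotvBl k (u w v : 'cV[R]_k) : dotv (u - w) v = dotv u v - dotv w v.
Proof. by rewrite dotvDl -scaleN1r dotvZl mulN1r. Qed.

Lemma dotvDr k (u w v : 'cV[R]_k) : dotv v (u + w) = dotv v u + dotv v w.
Proof. by rewrite dotvC dotvDl !(dotvC v). Qed.

Lemma dotvZr k (c : R) (u v : 'cV[R]_k) : dotv v (c *: u) = c * dotv v u.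
Proof. by rewrite dotvC dotvZl dotvC. Qed.

Lemma dotvBr k (u w v : 'cV[R]_k) : dotv v (u - w) = dotv v u - dotv v w.
Proof. by rewrite dotvC dotvBl !(dotvC v). Qed.

Lemma dotv0l k (v : 'cV[R]_k) : dotv 0 v = 0.
Proof. by rewrite /dotv big1 // => i _; rewrite mxE mul0r. Qed.

Lemma dotv_suml k (I : Type) (r : seq I) (Q : pred I) (v : I -> 'cV[R]_k) q :
  dotv (\sum_(t <- r | Q t) v t) q = \sum_(t <- r | Q t) dotv (v t) q.
Proof. by apply: (big_morph (fun v => dotv v q)) => [a b|]; rewrite ?dotvDl ?dotv0l. Qed.

Lemma dotv_mulmxl k l (A : 'M[R]_(k, l)) (x : 'cV[R]_l) (q : 'cV[R]_k) :
  dotv (A *m x) q = dotv x (A^T *m q).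
Proof.
rewrite /dotv; under eq_bigr => i _ do rewrite mxE mulr_suml.
rewrite exchange_big; apply: eq_bigr => j _.
rewrite mxE mulr_sumr; apply: eq_bigr => i _; rewrite !mxE; ring.
Qed.

Lemma dotvvE k (u : 'cV[R]_k) : dotv u u = \sum_i u i 0 ^+ 2.
Proof. by apply: eq_bigr => i _; rewrite expr2. Qed.

Lemma dotvv_ge0 k (u : 'cV[R]_k) : 0 <= dotv u u.
Proof. by rewrite dotvvE; apply: sumr_ge0 => i _; apply: sqr_ge0. Qed.

Lemma dotvv_eq0 k (u : 'cV[R]_k) : dotv u u = 0 -> u = 0.
Proof.
move=> /eqP; rewrite psumr_eq0 => [/allP u0|i _]; last by rewrite -expr2 sqr_ge0.
apply/matrixP => i j; rewrite (ord1 j) mxE.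
by have := u0 i (mem_index_enum _); rewrite mulf_eq0 orbb => /eqP.
Qed.

Lemma norm2_ge0 k (u : 'cV[R]_k) : 0 <= norm2 u.
Proof. exact: sqrtr_ge0. Qed.

Lemma sqr_norm2 k (u : 'cV[R]_k) : norm2 u ^+ 2 = dotv u u.
Proof. by rewrite sqr_sqrtr // dotvv_ge0. Qed.

Lemma norm2Z k (c : R) (v : 'cV[R]_k) : norm2 (c *: v) = `|c| * norm2 v.
Proof. by rewrite /norm2 dotvZl dotvZr mulrA -expr2 sqrtrM ?sqr_ge0 // sqrtr_sqr. Qed.

Lemma norm2_distC k (a b : 'cV[R]_k) : norm2 (a - b) = norm2 (b - a).
Proof. by rewrite -opprB -scaleN1r norm2Z normrN1 mul1r. Qed.

Lemma dotvv_conv k (l : R) (y x c : 'cV[R]_k) :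
  dotv (l *: y + (1 - l) *: x - c) (l *: y + (1 - l) *: x - c) =
  l * dotv (y - c) (y - c) + (1 - l) * dotv (x - c) (x - c)
  - l * (1 - l) * dotv (y - x) (y - x).
Proof.
rewrite /dotv !mulr_sumr -big_split -sumrB /=; apply: eq_bigr => i _.
by rewrite !mxE; ring.
Qed.

Lemma cauchy_schwarz_sum k (a b : 'I_k -> R) :
  (\sum_i a i * b i) ^+ 2 <= (\sum_i a i ^+ 2) * (\sum_i b i ^+ 2).
Proof.
set X := \sum_i a i ^+ 2; set Y := \sum_i b i ^+ 2; set Z := \sum_i a i * b i.
have Y0 : 0 <= Y by apply: sumr_ge0 => i _; apply: sqr_ge0.
have [Yp|] := ltP 0 Y.
  have : 0 <= \sum_i (Y * a i - Z * b i) ^+ 2 by apply: sumr_ge0 => i _; apply: sqr_ge0.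
  have -> : \sum_i (Y * a i - Z * b i) ^+ 2 = Y * (X * Y - Z ^+ 2).
    transitivity (\sum_i (Y ^+ 2 * a i ^+ 2 - 2 * Y * Z * (a i * b i) + Z ^+ 2 * b i ^+ 2)).
      by apply: eq_bigr => i _; ring.
    by rewrite big_split /= sumrB -!mulr_sumr -/X -/Y -/Z; ring.
  by rewrite pmulr_rge0 // subr_ge0.
move=> Yle0; have Y00 : Y = 0 by apply/eqP; rewrite eq_le Yle0 Y0.
move: (Y00) => /eqP; rewrite psumr_eq0 => [/allP b0|i _]; last exact: sqr_ge0.
rewrite /Z big1 => [|i _]; first by rewrite Y00 expr0n mulr0.
by have := b0 i (mem_index_enum _); rewrite sqrf_eq0 => /eqP ->; rewrite mulr0.
Qed.

Lemma dotv_cauchy_schwarz k (u v : 'cV[R]_k) : `|dotv u v| <= norm2 u * norm2 v.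
Proof.
rewrite /norm2 -sqrtrM ?dotvv_ge0 // -sqrtr_sqr ler_sqrt ?mulr_ge0 ?dotvv_ge0 //.
by rewrite !dotvvE; apply: cauchy_schwarz_sum.
Qed.

Lemma opnorm_has_ubound p q (A : 'M[R]_(p, q)) :
  has_ubound [set norm2 (A *m x) | x in [set x : 'cV[R]_q | norm2 x <= 1]].
Proof.
set F := \sum_i \sum_j A i j ^+ 2.
exists (Num.max 1 F) => _ [x /= x1 <-].
have xx1 : dotv x x <= 1.
  by rewrite -sqr_norm2 -(expr1n _ 2%N) ler_pXn2r // ?nnegrE ?norm2_ge0.
have AxF : dotv (A *m x) (A *m x) <= F.
  apply: (@le_trans _ _ (\sum_i (\sum_j A i j ^+ 2) * dotv x x)).
    apply: ler_sum => i _; rewrite mxE -expr2.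
    by rewrite dotvvE; apply: cauchy_schwarz_sum.
  rewrite -mulr_suml -[leRHS]mulr1 ler_wpM2l //.
  by apply: sumr_ge0 => i _; apply: sumr_ge0 => j _; apply: sqr_ge0.
rewrite le_max; have [//|Ax1] := leP (norm2 (A *m x)) 1.
apply/orP; right; apply: le_trans AxF.
by rewrite -sqr_norm2 expr2 ler_peMr ?norm2_ge0 // ltW.
Qed.

Lemma norm2_mulmx_le p q (A : 'M[R]_(p, q)) (x : 'cV[R]_q) :
  norm2 (A *m x) <= opnorm A * norm2 x.
Proof.
have [x0|xn0] := eqVneq (norm2 x) 0.
  have -> : x = 0 by apply: dotvv_eq0; rewrite -sqr_norm2 x0; exact: expr0n.
  by rewrite mulmx0 /norm2 !dotv0l sqrtr0 mulr0.
have xpos : 0 < norm2 x by rewrite lt_def xn0 norm2_ge0.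
have : norm2 (A *m ((norm2 x)^-1 *: x)) <= opnorm A.
  apply: ub_le_sup; first exact: opnorm_has_ubound.
  by exists ((norm2 x)^-1 *: x); rewrite //= norm2Z ger0_norm ?invr_ge0 ?norm2_ge0 // mulVf.
rewrite -scalemxAr norm2Z ger0_norm ?invr_ge0 ?norm2_ge0 //.
by rewrite ler_pdivrMl // mulrC.
Qed.

Lemma norm2B_le_diam k (S : set 'cV[R]_k) a b :
  bounded_set2 S -> S a -> S b -> norm2 (a - b) <= diam S.
Proof.
move=> [M SM] Sa Sb; apply: ub_le_sup; last by exists a, b.
exists (2 * M) => _ [a' [b' [Sa' [Sb' ->]]]].
have parallelogram : dotv (a' - b') (a' - b') <= 2 * dotv a' a' + 2 * dotv b' b'.
  rewrite /dotv !mulr_sumr -big_split /=; apply: ler_sum => i _; rewrite !mxE.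
  by have := sqr_ge0 (a' i 0 + b' i 0); nra.
have Ma' := SM _ Sa'; have Mb' := SM _ Sb'.
have a'0 := norm2_ge0 a'; have b'0 := norm2_ge0 b'.
rewrite -!sqr_norm2 in parallelogram.
rewrite -(@ler_pXn2r _ 2) ?nnegrE ?norm2_ge0 //; [nra | lra].
Qed.

End Euclidean.

Section Inequalities.
Variable R : realType.
Implicit Types (k : nat).

Lemma young_le (s p q a b : R) : 0 <= p -> 0 <= q -> s ^+ 2 <= p * q ->
  s * a * b <= p / 2 * a ^+ 2 + q / 2 * b ^+ 2.
Proof.
move=> p0 q0 spq; have [pp|] := ltP 0 p.
  have : 0 <= (p * a - s * b) ^+ 2 + (p * q - s ^+ 2) * b ^+ 2.
    by rewrite addr_ge0 ?sqr_ge0 // mulr_ge0 ?sqr_ge0 ?subr_ge0.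
  have -> : (p * a - s * b) ^+ 2 + (p * q - s ^+ 2) * b ^+ 2 =
            p * (2 * (p / 2 * a ^+ 2 + q / 2 * b ^+ 2 - s * a * b)) by field.
  by rewrite pmulr_rge0 // pmulr_rge0 // subr_ge0.
move=> p_le0; have p00 : p = 0 by apply/eqP; rewrite eq_le p_le0 p0.
rewrite p00 mul0r in spq; rewrite p00.
have -> : s = 0 by apply/eqP; rewrite -sqrf_eq0 eq_le sqr_ge0 spq.
by rewrite !mul0r add0r mulr_ge0 ?sqr_ge0 ?divr_ge0.
Qed.

Lemma ler_of_forall_lt1 (g c h : R) : 0 <= c ->
  (forall l, 0 < l -> l < 1 -> g + c * (1 - l) <= h) -> g + c <= h.
Proof.
move=> c0 gch; apply/ler_addgt0Pr => e e0.
pose l := Num.min (1 / 2) (e / (c + 1)).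
have l0 : 0 < l by rewrite lt_min; apply/andP; split; [lra | apply: divr_gt0; lra].
have l1 : l < 1 by rewrite gt_min; apply/orP; left; lra.
have cle : c * l <= e.
  apply: (@le_trans _ _ (c * (e / (c + 1)))); first by rewrite ler_wpM2l // ge_min lexx orbT.
  rewrite mulrA ler_pdivrMr; lra.
by have := gch l l0 l1; lra.
Qed.

Lemma sum_le_telescope (a b c s : nat -> R) N : (0 < N)%N ->
  (forall t, (1 <= t <= N)%N -> a t <= b t - c t) ->
  (forall t, (1 <= t < N)%N -> b t.+1 <= c t + s t) ->
  \sum_(1 <= t < N.+1) a t <= b 1%N - c N + \sum_(1 <= t < N) s t.
Proof.
elim: N => [//|[_ _ abc _|N IH _ abc bcs]].
  by rewrite big_nat1 big_geq // addr0 abc.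
rewrite big_nat_recr //= [X in _ <= _ + X]big_nat_recr //=.
have := IH isT (fun t ht => abc t ltac:(lia)) (fun t ht => bcs t ltac:(lia)).
have := abc N.+2 ltac:(lia); have := bcs N.+1 ltac:(lia).
lra.
Qed.

Lemma gauss_sumr N : (\sum_(1 <= t < N.+1) (t%:R : R)) *+ 2 = N%:R * N.+1%:R.
Proof.
elim: N => [|N IH]; first by rewrite big_geq // mul0rn mul0r.
by rewrite big_nat_recr //= mulrnDl IH -!natr1; ring.
Qed.

Lemma sumr_nat_gt0 (w : nat -> R) N : (0 < N)%N ->
  (forall t, (1 <= t <= N)%N -> 0 < w t) -> 0 < \sum_(1 <= t < N.+1) w t.
Proof.
move=> N0 w0; rewrite big_nat_recr //= ltr_wpDl ?w0 ?N0 ?leqnn //.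
rewrite big_nat_cond sumr_ge0 // => t /andP[tN _]; apply/ltW/w0; lia.
Qed.

Lemma fin_num_of_le (e : \bar R) (r : R) :
  (e != -oo)%E -> (e <= r%:E)%E -> e \is a fin_num.
Proof. by move=> eNy er; apply/fin_numP; split => //; apply: contraTneq er => ->. Qed.

Lemma fin_num_or_pinfty (e : \bar R) : (e != -oo)%E -> e \is a fin_num \/ e = +oo%E.
Proof.
move=> eNy; have [|/fin_numPn[eNy'|]] := boolP (e \is a fin_num); [by left | | by right].
by rewrite eNy' in eNy.
Qed.

Lemma adde_neqNy (x y : \bar R) : (x != -oo)%E -> (y != -oo)%E -> (x + y != -oo)%E.
Proof. by case: x y => [x||] [y||]. Qed.

Lemma convex_set_conv k (X : set 'cV[R]_k) x y (l : R) : convex_set X -> X x -> X y ->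
  0 <= l -> l <= 1 -> X (l *: x + (1 - l) *: y).
Proof.
by move=> cX Xx Xy l0 l1; have := cX x y (Itv01 l0 l1); rewrite !inE => /(_ Xx Xy).
Qed.

Lemma EFinB_opp (e : \bar R) (a b : R) : (a%:E - e - b%:E = - (e + (b - a)%:E))%E.
Proof.
by case: e => [r||] //=; congr EFin; ring.
Qed.

End Inequalities.

(** * Strong convexity and proximal steps *)

Section StrongConvexity.
Variable R : realType.
Implicit Types (k : nat).

Definition strongly_convex_on k (D : set 'cV[R]_k) (a : R) (G : 'cV[R]_k -> R) :=
  forall (y z : 'cV[R]_k) (l : R), D y -> D z -> 0 < l -> l < 1 ->
  D (l *: y + (1 - l) *: z) /\
  G (l *: y + (1 - l) *: z) <= l * G y + (1 - l) * G z
                               - a / 2 * (l * (1 - l)) * dotv (y - z) (y - z).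

Lemma strongly_convex_on_min_growth k (D : set 'cV[R]_k) a G xo : 0 <= a ->
  strongly_convex_on D a G -> D xo -> (forall y, D y -> G xo <= G y) ->
  forall y, D y -> G xo + a / 2 * dotv (y - xo) (y - xo) <= G y.
Proof.
move=> a0 Gsc Dxo Gmin y Dy; set d := dotv (y - xo) (y - xo).
have d0 : 0 <= a / 2 * d by rewrite mulr_ge0 ?divr_ge0 ?dotvv_ge0.
apply: ler_of_forall_lt1 => // l l0 l1.
have [Dz Gz] := Gsc y xo l Dy Dxo l0 l1; have := Gmin _ Dz; rewrite -/d in Gz => Gxz.
rewrite -(ler_pM2l l0).
have -> : l * (G xo + a / 2 * d * (1 - l)) = l * G xo + a / 2 * (l * (1 - l)) * d by ring.
lra.
Qed.

Definition strongly_convex_fin k (a : R) (F : 'cV[R]_k -> \bar R) :=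
  forall (y z : 'cV[R]_k) (l : R),
  F y \is a fin_num -> F z \is a fin_num -> 0 < l -> l < 1 ->
  (F (l *: y + (1 - l) *: z)%R <=
   (l * fine (F y) + (1 - l) * fine (F z) - a / 2 * (l * (1 - l)) * dotv (y - z) (y - z))%:E)%E.

Lemma strongly_convex_finD k a b (F G : 'cV[R]_k -> \bar R) :
  strongly_convex_fin a F -> strongly_convex_fin b G ->
  strongly_convex_fin (a + b) (fun y => F y + G y)%E.
Proof.
move=> Fsc Gsc y z l; rewrite !fin_numD => /andP[Fy Gy] /andP[Fz Gz] l0 l1.
apply: le_trans (leeD (Fsc y z l Fy Fz l0 l1) (Gsc y z l Gy Gz l0 l1)) _.
by rewrite -EFinD lee_fin !fineD // le_eqVlt; apply/orP; left; apply/eqP; ring.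
Qed.

Lemma strongly_convex_fin_sqr k (c : R) (p z : 'cV[R]_k) :
  strongly_convex_fin c (fun y => (c / 2 * dotv (y - p) (y - p) - dotv z y)%:E).
Proof.
move=> y x l _ _ _ _; rewrite lee_fin /= dotvv_conv [dotv z _]dotvDr !dotvZr.
by rewrite le_eqVlt; apply/orP; left; apply/eqP; ring.
Qed.

Lemma strongly_convex_to_fin k a (u : 'cV[R]_k -> \bar R) :
  (forall x, u x != -oo)%E -> strongly_convex a u -> strongly_convex_fin a u.
Proof.
move=> uNy usc y z l uy uz l0 l1; have := usc y z l; rewrite l0 l1 => /(_ isT).
rewrite -(fineK uy) -(fineK uz) -!EFinB -!EFinM -EFinD lee_subel_addr // -EFinD.
move/le_trans; apply; rewrite lee_fin !sqr_norm2.
have := dotvv_conv l y z 0; rewrite !subr0 => ->.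
by rewrite le_eqVlt; apply/orP; left; apply/eqP; ring.
Qed.

Lemma convex_fun_fin k (f : 'cV[R]_k -> \bar R) : convex_fun f -> strongly_convex_fin 0 f.
Proof.
move=> fcvx y z l fy fz l0 l1; rewrite !mul0r subr0.
have := fcvx y z l; rewrite l0 l1 => /(_ isT) /le_trans; apply.
by rewrite -(fineK fy) -(fineK fz) /= -!EFinM -EFinD.
Qed.

Lemma strongly_convex_finW k a b (F : 'cV[R]_k -> \bar R) : 0 <= b -> b <= a ->
  strongly_convex_fin a F -> strongly_convex_fin b F.
Proof.
move=> b0 ba Fsc y z l Fy Fz l0 l1; apply: le_trans (Fsc y z l Fy Fz l0 l1) _.
rewrite lee_fin lerD2l lerN2; apply: ler_wpM2r; first exact: dotvv_ge0.
apply: ler_wpM2r; first by rewrite mulr_ge0 ?subr_ge0 // ltW.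
by rewrite ler_pM2r.
Qed.

Lemma strongly_convex_fin_min_growth k (X : set 'cV[R]_k) (F : 'cV[R]_k -> \bar R)
    (a : R) xo :
  convex_set X -> (forall y, F y != -oo)%E -> 0 <= a -> strongly_convex_fin a F ->
  X xo -> (forall y, X y -> (F xo <= F y)%E) ->
  forall y, X y -> F y \is a fin_num ->
  F xo \is a fin_num /\ fine (F xo) + a / 2 * dotv (y - xo) (y - xo) <= fine (F y).
Proof.
move=> cX FNy a0 Fsc Xxo Fmin y Xy Fy.
have Fxo : F xo \is a fin_num.
  by apply: (fin_num_of_le (r := fine (F y)) (FNy xo)); rewrite fineK ?Fmin.
split => //; pose D := [set y | X y /\ F y \is a fin_num].
have Dsc : strongly_convex_on D a (fine \o F).
  move=> y1 y2 l [Xy1 Fy1] [Xy2 Fy2] l0 l1; have Fw := Fsc y1 y2 l Fy1 Fy2 l0 l1.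
  split; first by split; [apply: convex_set_conv => //; exact: ltW | exact: fin_num_of_le Fw].
  by rewrite /= -lee_fin fineK //; exact: fin_num_of_le Fw.
have := strongly_convex_on_min_growth a0 Dsc (conj Xxo Fxo).
move=> /(_ _ y (conj Xy Fy)); apply => z [Xz Fz].
by rewrite -lee_fin (fineK Fxo) (fineK Fz) Fmin.
Qed.

Lemma prox_three_point k (X : set 'cV[R]_k) (F : 'cV[R]_k -> \bar R) (a c : R)
    (p z xo : 'cV[R]_k) :
  convex_set X -> (forall y, F y != -oo)%E -> 0 <= a -> 0 <= c -> strongly_convex_fin a F ->
  let h y := c / 2 * dotv (y - p) (y - p) - dotv z y in
  X xo -> (forall y, X y -> (F xo + (h xo)%:E <= F y + (h y)%:E)%E) ->
  forall y, X y -> F y \is a fin_num ->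
  F xo \is a fin_num /\
  fine (F xo) + h xo + (a + c) / 2 * dotv (y - xo) (y - xo) <= fine (F y) + h y.
Proof.
move=> cX FNy a0 c0 Fsc h Xxo xomin y Xy Fy.
have Fhsc := strongly_convex_finD Fsc (@strongly_convex_fin_sqr k c p z).
have FhNy : forall y, (F y + (h y)%:E != -oo)%E by move=> y'; rewrite adde_neqNy.
have [] := strongly_convex_fin_min_growth cX FhNy (addr_ge0 a0 c0) Fhsc Xxo xomin Xy.
  by rewrite fin_numD Fy.
by rewrite fin_numD => /andP[Fxo _]; rewrite !fineD.
Qed.

End StrongConvexity.

Section WeightedAverage.
Variable R : realType.

Lemma xbarS n (w : nat -> R) (x : nat -> 'cV[R]_n) N :
  let W := \sum_(1 <= t < N.+1) w t in
  W != 0 -> W + w N.+1 != 0 ->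
  xbar w x N.+1 = (W / (W + w N.+1)) *: xbar w x N + (1 - W / (W + w N.+1)) *: x N.+1.
Proof.
move=> W W0 W1; rewrite /xbar -/W; set V := \sum_(1 <= t < N.+1) _.
rewrite !(big_nat_recr N.+1) //= -/W -/V scalerDr !scalerA.
by congr (_ *: _ + _ *: _); field; rewrite ?W0 ?W1.
Qed.

Lemma convex_xbar n (u : 'cV[R]_n -> \bar R) (w : nat -> R) (x : nat -> 'cV[R]_n) N :
  (forall y, u y != -oo)%E -> strongly_convex_fin 0 u -> (0 < N)%N ->
  (forall t, (1 <= t <= N)%N -> 0 < w t) ->
  (forall t, (1 <= t <= N)%N -> u (x t) \is a fin_num) ->
  (u (xbar w x N) <=
   ((\sum_(1 <= t < N.+1) w t * fine (u (x t))) / \sum_(1 <= t < N.+1) w t)%:E)%E.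
Proof.
move=> uNy ucvx; elim: N => [//|[|N] IH _ w0 ufin].
  have w1 : 0 < w 1%N by apply: w0.
  rewrite /xbar !big_nat1 scalerA mulVf ?gt_eqF // scale1r mulrC mulKf ?gt_eqF //.
  by rewrite fineK //; apply: ufin.
set W := \sum_(1 <= t < N.+2) w t; set U := \sum_(1 <= t < N.+2) w t * fine (u (x t)).
have W0 : 0 < W by apply: sumr_nat_gt0 => // t ht; apply: w0; lia.
have wN : 0 < w N.+2 by apply: w0; lia.
have uN : u (x N.+2) \is a fin_num by apply: ufin; lia.
have {}IH : (u (xbar w x N.+1) <= (U / W)%:E)%E.
  by apply: IH => // t ht; [apply: w0 | apply: ufin]; lia.
have uxbar := fin_num_of_le (uNy _) IH.
set l := W / (W + w N.+2).
have l0 : 0 < l by rewrite divr_gt0 ?addr_gt0.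
have l1 : l < 1 by rewrite ltr_pdivrMr ?addr_gt0 // mul1r ltrDl.
rewrite xbarS ?gt_eqF ?addr_gt0 // -/W -/l.
apply: le_trans (ucvx _ _ _ uxbar uN l0 l1) _.
rewrite !(big_nat_recr N.+2) //= -/W -/U lee_fin !mul0r subr0.
rewrite -(fineK uxbar) lee_fin in IH.
have -> : (U + w N.+2 * fine (u (x N.+2))) / (W + w N.+2) =
          l * (U / W) + (1 - l) * fine (u (x N.+2)).
  by rewrite /l; field; rewrite !gt_eqF ?addr_gt0.
by rewrite lerD2r ler_pM2l.
Qed.

End WeightedAverage.

Section AffineSup.
Variables (R : realType) (m k : nat) (P : set 'cV[R]_m) (rho : 'cV[R]_m -> \bar R).
Variable L : 'cV[R]_m -> 'cV[R]_k -> R.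
Hypothesis rhoNy : forall p, P p -> (rho p != -oo)%E.
Hypothesis rho_fin : exists2 p, P p & rho p \is a fin_num.
Hypothesis L_affine :
  forall p y z l, L p (l *: y + (1 - l) *: z) = l * L p y + (1 - l) * L p z.

Definition affine_sup (y : 'cV[R]_k) := ereal_sup [set ((L p y)%:E - rho p)%E | p in P].

Lemma affine_sup_ub p y : P p -> ((L p y)%:E - rho p <= affine_sup y)%E.
Proof. by move=> Pp; apply: ereal_sup_ubound; exists p. Qed.

Lemma affine_sup_neqNy y : (affine_sup y != -oo)%E.
Proof.
case: rho_fin => p Pp rhop; have := affine_sup_ub y Pp.
by rewrite -(fineK rhop) -EFinB; apply: contraTneq => ->; rewrite leeNy_eq.
Qed.

Lemma affine_sup_le p y : P p -> rho p \is a fin_num -> affine_sup y \is a fin_num ->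
  L p y - fine (rho p) <= fine (affine_sup y).
Proof.
move=> Pp rhop Sy; have := affine_sup_ub y Pp.
by rewrite -(fineK rhop) -(fineK Sy) -EFinB lee_fin.
Qed.

Lemma affine_sup_convex : strongly_convex_fin 0 affine_sup.
Proof.
move=> y z l Sy Sz l0 l1; apply: ge_ereal_sup => _ [p Pp <-].
have [rhop|->] := fin_num_or_pinfty (rhoNy Pp); last by rewrite addeNy leNye.
rewrite -(fineK rhop) -EFinB lee_fin L_affine !mul0r subr0.
have := affine_sup_le Pp rhop Sy; have := affine_sup_le Pp rhop Sz.
set r := fine (rho p); move=> Lz Ly.
have -> : l * L p y + (1 - l) * L p z - r = l * (L p y - r) + (1 - l) * (L p z - r) by ring.
by rewrite lerD // ler_wpM2l // ?subr_ge0 ltW.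
Qed.

End AffineSup.

(** * The non-smooth DRAO iteration *)

Section DRAO.
(* Declared without implicit arguments, which would otherwise hide [i] in [Pi i]. *)
Unset Implicit Arguments.
Variables (R : realType) (n m : nat) (mi : 'I_m -> nat) (X : set 'cV[R]_n).
Variables (P : set 'cV[R]_m) (rho : 'cV[R]_m -> \bar R) (u : 'cV[R]_n -> \bar R) (alpha : R).
Variables (A : forall i, 'M[R]_(mi i, n)) (Pi : forall i, set 'cV[R]_(mi i)).
Variables (fstar : forall i, 'cV[R]_(mi i) -> \bar R) (xs : 'cV[R]_n).
Hypotheses (cX : convex_set X) (PS : P `<=` @simplex R m).
Hypothesis rhoNy : forall p, P p -> (rho p != -oo)%E.
Hypothesis rho_fin : exists2 p, P p & rho p \is a fin_num.
Hypotheses (uNy : forall y, (u y != -oo)%E) (alpha0 : 0 <= alpha).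
Hypothesis usc : strongly_convex_fin alpha u.
Hypotheses (cPi : forall i : 'I_m, convex_set (Pi i)) (bPi : forall i : 'I_m, bounded_set2 (Pi i)).
Hypothesis fsNy : forall (i : 'I_m) q, (fstar i q != -oo)%E.
Hypothesis fscvx : forall i : 'I_m, convex_fun (fstar i).
Hypothesis fs_fin : forall i : 'I_m, exists q, Pi i q /\ fstar i q \is a fin_num.
Hypotheses (Xxs : X xs) (fxs : fobj A Pi fstar P rho u xs \is a fin_num).
Set Implicit Arguments.

Let MA := \big[Num.max/0]_(i < m) opnorm (A i).
Let DPi := \big[Num.max/0]_(i < m) diam (Pi i).
Let sup_part y := ereal_sup
  [set (\sum_(i < m) (p i 0)%:E * fi (A i) (Pi i) (fstar i) y - rho p)%E | p in P].

Lemma sup_part_xs_fin : sup_part xs \is a fin_num.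
Proof. by move: fxs; rewrite /fobj fin_numD => /andP[]. Qed.

Lemma u_xs_fin : u xs \is a fin_num.
Proof. by move: fxs; rewrite /fobj fin_numD => /andP[]. Qed.

Lemma norm2B_le_DPi i a b : Pi i a -> Pi i b -> norm2 (a - b) <= DPi.
Proof.
move=> Pia Pib; apply: le_trans (norm2B_le_diam (bPi i) Pia Pib) _.
by rewrite /DPi (bigD1 i) //= le_max lexx.
Qed.

Lemma norm2_mulmx_le_MA i (v : 'cV[R]_n) : norm2 (A i *m v) <= MA * norm2 v.
Proof.
apply: le_trans (norm2_mulmx_le _ _) _; rewrite ler_wpM2r ?norm2_ge0 //.
by rewrite /MA (bigD1 i) //= le_max lexx.
Qed.

Lemma MA_ge0 : 0 <= MA.
Proof. by rewrite /MA; elim/big_rec: _ => // i y _ y0; rewrite le_max y0 orbT. Qed.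

Lemma DPi_ge0 : 0 <= DPi.
Proof. by rewrite /DPi; elim/big_rec: _ => // i y _ y0; rewrite le_max y0 orbT. Qed.

Section Run.
Unset Implicit Arguments.
Variables (N : nat) (w th eta tau : nat -> R) (ctau : R).
Variables (x : nat -> 'cV[R]_n) (pi : nat -> forall i, 'cV[R]_(mi i)).
Hypotheses (N0 : (0 < N)%N) (ctau0 : 0 <= ctau).
Hypotheses (w0 : forall t, (1 <= t <= N)%N -> 0 < w t).
Hypotheses (eta0 : forall t, (1 <= t <= N)%N -> 0 <= eta t).
Hypothesis wtau : forall t, (1 <= t <= N)%N -> w t * tau t = ctau.
Hypothesis wth : forall t, (1 <= t < N)%N -> w t.+1 * th t.+1 = w t.
(* [DPi = 0] covers part (a) with a single-point dual set, where [tau] divides by zero. *)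
Hypothesis weta_ctau : forall t, (1 <= t <= N)%N -> DPi = 0 \/ w t * MA ^+ 2 <= eta t * ctau.
Hypothesis wetaS : forall t, (1 <= t < N)%N -> w t.+1 * eta t.+1 <= w t * (eta t + alpha).
Hypothesis run : DRAO_ns X A Pi fstar P rho u th eta tau N x pi.
Set Implicit Arguments.

Let xt t := x t.-1 + th t *: (x t.-1 - x t.-2).

Lemma pi_mem t i : (t <= N)%N -> Pi i (pi t i).
Proof.
case: run => _ pi0 step; case: t => [_|t tN]; first exact: pi0.
by have := step t.+1 tN; cbv zeta => -[/(_ i)[]].
Qed.

Lemma pi_three_point t i : (1 <= t <= N)%N ->
  fstar i (pi t i) \is a fin_num /\
  forall q, Pi i q -> fstar i q \is a fin_num ->
  dotv (A i *m xt t) (q - pi t i) - fine (fstar i q) + fine (fstar i (pi t i)) <=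
  tau t / 2 * (dotv (q - pi t.-1 i) (q - pi t.-1 i) - dotv (q - pi t i) (q - pi t i)
               - dotv (pi t i - pi t.-1 i) (pi t i - pi t.-1 i)).
Proof.
move=> tN; case: run => _ _ /(_ t tN); cbv zeta => -[/(_ i)[Ppi pimax] _ _].
have tau0 : 0 <= tau t by rewrite -(ler_pM2l (w0 _ tN)) mulr0 wtau.
have := prox_three_point (p := pi t.-1 i) (z := A i *m xt t) (cPi i) (fsNy i) (lexx 0) tau0
  (convex_fun_fin (fscvx i)) Ppi.
cbv zeta => prox.
have pimin : forall q, Pi i q ->
    (fstar i (pi t i) + (tau t / 2 * dotv (pi t i - pi t.-1 i) (pi t i - pi t.-1 i)
                         - dotv (A i *m xt t) (pi t i))%:E <=
     fstar i q + (tau t / 2 * dotv (q - pi t.-1 i) (q - pi t.-1 i) - dotv (A i *m xt t) q)%:E)%E.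
  by move=> q Pq; rewrite -leeN2 -!EFinB_opp -!sqr_norm2; apply: pimax.
have [q0 [Pq0 fq0]] := fs_fin i; have [fpi _] := prox pimin q0 Pq0 fq0.
split=> // q Pq fq; have [_] := prox pimin q Pq fq.
rewrite [dotv (A i *m xt t) (q - _)]dotvBr; lra.
Qed.

Let lin t (p : 'cV[R]_m) (y : 'cV[R]_n) :=
  \sum_(i < m) p i 0 * (dotv y ((A i)^T *m pi t i) - fine (fstar i (pi t i))).

Lemma lin_affine t p (y z : 'cV[R]_n) (l : R) :
  lin t p (l *: y + (1 - l) *: z) = l * lin t p y + (1 - l) * lin t p z.
Proof.
rewrite /lin !mulr_sumr -big_split; apply: eq_bigr => i _.
by rewrite dotvDl !dotvZl /=; ring.
Qed.

Let lin_sup t := affine_sup P rho (lin t).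

Lemma lin_sup_neqNy t y : (lin_sup t y != -oo)%E.
Proof. exact: affine_sup_neqNy. Qed.

Lemma lin_sup_convex t : strongly_convex_fin 0 (lin_sup t).
Proof. exact: affine_sup_convex rhoNy (@lin_affine t). Qed.

Lemma lin_supE t y : (1 <= t <= N)%N ->
  ereal_sup [set (\sum_(i < m) (p i 0)%:E * ((dotv y ((A i)^T *m pi t i))%:E - fstar i (pi t i))
                  - rho p)%E | p in P] = lin_sup t y.
Proof.
move=> tN; congr ereal_sup; apply: eq_imagel => p _; congr (_ - _)%E.
rewrite /lin -sumEFin; apply: eq_bigr => i _; have [fpi _] := pi_three_point i tN.
by rewrite -[in LHS](fineK fpi) -EFinB -EFinM.
Qed.

Lemma lin_sup_le_sup_part t y : (1 <= t <= N)%N -> (lin_sup t y <= sup_part y)%E.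
Proof.
move=> tN; apply: ge_ereal_sup => _ [p Pp <-]; apply: le_trans (ereal_sup_ubound _); last first.
  by exists p.
rewrite leeD2r // /lin -sumEFin; apply: lee_sum => i _.
rewrite EFinM; apply: lee_wpmul2l; first by rewrite lee_fin; case: (PS _ Pp).
have [fpi _] := pi_three_point i tN; rewrite -dotv_mulmxl EFinB (fineK fpi).
by apply: ereal_sup_ubound; exists (pi t i) => //; apply: pi_mem; case/andP: tN.
Qed.

Let model t y := fine (lin_sup t y) + fine (u y).

Lemma x_three_point t : (1 <= t <= N)%N ->
  [/\ lin_sup t (x t) \is a fin_num, u (x t) \is a fin_num, lin_sup t xs \is a fin_num &
  model t (x t) + eta t / 2 * dotv (x t - x t.-1) (x t - x t.-1)
    + (eta t + alpha) / 2 * dotv (xs - x t) (xs - x t)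
  <= model t xs + eta t / 2 * dotv (xs - x t.-1) (xs - x t.-1)].
Proof.
move=> tN; case: run => _ _ /(_ t tN); cbv zeta => -[_ Xxt xmin].
have Sxs : lin_sup t xs \is a fin_num.
  apply: (fin_num_of_le (r := fine (sup_part xs)) (lin_sup_neqNy _ _)).
  by rewrite fineK ?sup_part_xs_fin ?lin_sup_le_sup_part.
have FNy : forall y, (lin_sup t y + u y != -oo)%E by move=> y; rewrite adde_neqNy ?lin_sup_neqNy.
have Fsc := strongly_convex_finD (lin_sup_convex (t := t)) usc; rewrite add0r in Fsc.
pose h y := eta t / 2 * dotv (y - x t.-1) (y - x t.-1) - dotv 0 y.
have Fmin : forall y, X y ->
    (lin_sup t (x t) + u (x t) + (h (x t))%:E <= lin_sup t y + u y + (h y)%:E)%E.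
  by move=> y Xy; rewrite /h !dotv0l !subr0 -!sqr_norm2 -!lin_supE //; apply: xmin.
have Fxs : (lin_sup t xs + u xs \is a fin_num)%E by rewrite fin_numD Sxs u_xs_fin.
have [] := prox_three_point cX FNy alpha0 (eta0 _ tN) Fsc Xxt Fmin Xxs Fxs.
rewrite fin_numD => /andP[Sxt uxt]; rewrite /model /h !fineD ?u_xs_fin // !dotv0l !subr0.
by split => //; lra.
Qed.

Lemma coupling_le t i v p p' : (1 <= t <= N)%N -> Pi i p -> Pi i p' ->
  w t * dotv (A i *m v) (p - p') <=
  w t * eta t / 2 * dotv v v + ctau / 2 * dotv (p - p') (p - p').
Proof.
move=> tN Pp Pp'; have wt := w0 _ tN.
have vdp : w t * dotv (A i *m v) (p - p') <= w t * MA * norm2 v * norm2 (p - p').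
  rewrite -!mulrA ler_pM2l // mulrA; apply: le_trans (ler_norm _) _.
  apply: le_trans (dotv_cauchy_schwarz _ _) _.
  by rewrite ler_wpM2r ?norm2_ge0 ?norm2_mulmx_le_MA.
have weta0 : 0 <= w t * eta t by rewrite mulr_ge0 ?eta0 // ltW.
apply: le_trans vdp _; have [D0|wMA] := weta_ctau _ tN.
  have -> : norm2 (p - p') = 0.
    by apply/eqP; rewrite eq_le norm2_ge0 andbT -D0 norm2B_le_DPi.
  by rewrite mulr0 addr_ge0 // mulr_ge0 ?dotvv_ge0 // divr_ge0.
rewrite -!sqr_norm2; apply: young_le => //.
by rewrite exprMn expr2 -mulrA -[_ * _ * ctau]mulrA ler_pM2l.
Qed.

Lemma dual_step t i q : (1 <= t <= N)%N -> Pi i q -> fstar i q \is a fin_num ->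
  w t * (dotv (A i *m x t) (q - pi t i) - fine (fstar i q) + fine (fstar i (pi t i))) <=
  ctau / 2 * (dotv (q - pi t.-1 i) (q - pi t.-1 i) - dotv (q - pi t i) (q - pi t i)
              - dotv (pi t i - pi t.-1 i) (pi t i - pi t.-1 i))
  + w t * dotv (A i *m (x t - x t.-1)) (q - pi t i)
  - w t * th t * (dotv (A i *m (x t.-1 - x t.-2)) (q - pi t.-1 i)
                  + dotv (A i *m (x t.-1 - x t.-2)) (pi t.-1 i - pi t i)).
Proof.
move=> tN Pq fq; have [_ /(_ q Pq fq)] := pi_three_point i tN.
have -> : dotv (A i *m x t) (q - pi t i) =
    dotv (A i *m xt t) (q - pi t i) + dotv (A i *m (x t - x t.-1)) (q - pi t i)
    - th t * (dotv (A i *m (x t.-1 - x t.-2)) (q - pi t.-1 i)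
              + dotv (A i *m (x t.-1 - x t.-2)) (pi t.-1 i - pi t i)).
  rewrite -dotvDr addrA subrK /xt !mulmxDr !mulmxN -!scalemxAr !mulmxDr !mulmxN.
  rewrite !dotvBl !dotvDl !dotvZl !dotvBl.
  ring.
move=> step; rewrite -(wtau _ tN); have := ler_wpM2l (ltW (w0 _ tN)) step; lra.
Qed.

Let drift := \sum_(1 <= t < N.+1) w t * eta t / 2 * dotv (x t - x t.-1) (x t - x t.-1).

Lemma dual_regret i q : Pi i q -> fstar i q \is a fin_num ->
  \sum_(1 <= t < N.+1) w t * (dotv (A i *m x t) (q - pi t i) - fine (fstar i q)
                              + fine (fstar i (pi t i)))
  <= ctau / 2 * DPi ^+ 2 + drift.
Proof.
move=> Pq fq.
pose D t := dotv (q - pi t i) (q - pi t i).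
pose E t := dotv (pi t i - pi t.-1 i) (pi t i - pi t.-1 i).
pose g t := dotv (A i *m (x t - x t.-1)) (q - pi t i).
pose e t := dotv (A i *m (x t.-1 - x t.-2)) (pi t.-1 i - pi t i).
pose s t := w t * eta t / 2 * dotv (x t - x t.-1) (x t - x t.-1).
(* Step [t] is bounded by [b t - c t]; the coupling [g t] telescopes from [c t] to
   [b t.+1], leaving the cross term [e t.+1] for Young's inequality. *)
pose b t := ctau / 2 * D t.-1 - w t * th t * g t.-1 - w t * th t * e t - ctau / 2 * E t.
pose c t := ctau / 2 * D t - w t * g t.
have step : forall t, (1 <= t <= N)%N ->
    w t * (dotv (A i *m x t) (q - pi t i) - fine (fstar i q) + fine (fstar i (pi t i)))
    <= b t - c t.
  move=> t tN; apply: le_trans (dual_step tN Pq fq) _.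
  by rewrite /b /c /D /E /g /e; lra.
have link : forall t, (1 <= t < N)%N -> b t.+1 <= c t + s t.
  move=> t tN; rewrite /b /c /= (wth _ tN).
  have tN' : (1 <= t <= N)%N by lia.
  have := coupling_le (x t - x t.-1) tN' (pi_mem i (t := t.+1) ltac:(lia))
                      (pi_mem i (t := t) ltac:(lia)).
  by rewrite /e /E /s !dotvBr; lra.
apply: le_trans (sum_le_telescope N0 step link) _.
have D0 : D 0%N <= DPi ^+ 2.
  have d := norm2B_le_DPi Pq (pi_mem i (leq0n N)).
  have DPi0 := le_trans (norm2_ge0 _) d.
  by rewrite /D -sqr_norm2 ler_pXn2r ?nnegrE ?norm2_ge0.
have E1 : 0 <= ctau / 2 * E 1%N by rewrite mulr_ge0 ?divr_ge0 ?dotvv_ge0.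
have cN : - c N <= s N.
  have := coupling_le (x N - x N.-1) (ltac:(lia) : (1 <= N <= N)%N) Pq (pi_mem i (leqnn N)).
  by rewrite /c /g /D /s; lra.
have -> : drift = \sum_(1 <= t < N) s t + s N by rewrite /drift big_nat_recr.
rewrite /b /g /e /= subrr mulmx0 !dotv0l.
have := ler_wpM2l (divr_ge0 ctau0 (ler0n _ 2)) D0; lra.
Qed.

Lemma primal_regret :
  \sum_(1 <= t < N.+1) w t * (model t (x t) - model t xs) + drift
  <= w 1 * eta 1 / 2 * dotv (x 0 - xs) (x 0 - xs).
Proof.
pose b t := w t * eta t / 2 * dotv (xs - x t.-1) (xs - x t.-1).
pose c t := w t * (eta t + alpha) / 2 * dotv (xs - x t) (xs - x t).
have step : forall t, (1 <= t <= N)%N ->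
    w t * (model t (x t) - model t xs) + w t * eta t / 2 * dotv (x t - x t.-1) (x t - x t.-1)
    <= b t - c t.
  move=> t tN; have [_ _ _ xineq] := x_three_point tN.
  have := ler_wpM2l (ltW (w0 _ tN)) xineq; rewrite /b /c /model; lra.
have link : forall t, (1 <= t < N)%N -> b t.+1 <= c t + 0.
  move=> t tN; rewrite addr0 /b /c /=.
  apply: ler_wpM2r; first exact: dotvv_ge0.
  by apply: ler_wpM2r; [rewrite invr_ge0 | exact: wetaS].
have NN : (1 <= N <= N)%N by lia.
have cN : 0 <= c N.
  rewrite /c mulr_ge0 ?dotvv_ge0 // divr_ge0 // mulr_ge0 ?addr_ge0 ?eta0 //.
  exact: ltW (w0 _ NN).
have := sum_le_telescope N0 step link; rewrite big1_eq addr0 big_split /= /drift /b /=.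
rewrite -[dotv (xs - _) _]sqr_norm2 -[dotv (x 0 - _) _]sqr_norm2 norm2_distC; lra.
Qed.

Let wsum := \sum_(1 <= t < N.+1) w t.

Lemma wsum_gt0 : 0 < wsum.
Proof. exact: sumr_nat_gt0. Qed.

Lemma dotv_xbar i q :
  dotv (A i *m xbar w x N) q = (\sum_(1 <= t < N.+1) w t * dotv (A i *m x t) q) / wsum.
Proof.
rewrite /xbar -scalemxAr dotvZl mulmx_sumr dotv_suml mulrC; congr (_ * _).
by apply: eq_bigr => t _; rewrite -scalemxAr dotvZl.
Qed.

Lemma fi_xbar_le i : (fi (A i) (Pi i) (fstar i) (xbar w x N) <=
  ((\sum_(1 <= t < N.+1) w t * (dotv (A i *m x t) (pi t i) - fine (fstar i (pi t i)))
    + ctau / 2 * DPi ^+ 2 + drift) / wsum)%:E)%E.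
Proof.
apply: ge_ereal_sup => _ [q Pq <-].
have [fq|->] := fin_num_or_pinfty (fsNy i q); last by rewrite addeNy leNye.
rewrite -(fineK fq) -EFinB lee_fin dotv_xbar ler_pdivlMr ?wsum_gt0 //.
rewrite mulrBl mulfVK ?gt_eqF ?wsum_gt0 //.
have := dual_regret Pq fq.
have -> : \sum_(1 <= t < N.+1)
    w t * (dotv (A i *m x t) (q - pi t i) - fine (fstar i q) + fine (fstar i (pi t i))) =
  \sum_(1 <= t < N.+1) w t * dotv (A i *m x t) q - fine (fstar i q) * wsum
  - \sum_(1 <= t < N.+1) w t * (dotv (A i *m x t) (pi t i) - fine (fstar i (pi t i))).
  by rewrite /wsum mulr_sumr -!sumrB; apply: eq_bigr => t _; rewrite dotvBr; ring.
lra.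
Qed.

Lemma sup_part_xbar_le : (sup_part (xbar w x N) <=
  ((\sum_(1 <= t < N.+1) w t * fine (lin_sup t (x t)) + ctau / 2 * DPi ^+ 2 + drift)
   / wsum)%:E)%E.
Proof.
apply: ge_ereal_sup => _ [p Pp <-]; have [p0 p1] := PS _ Pp.
have [rhop|->] := fin_num_or_pinfty (rhoNy _ Pp); last by rewrite addeNy leNye.
set K := ctau / 2 * DPi ^+ 2 + drift.
pose B i := (\sum_(1 <= t < N.+1) w t * (dotv (A i *m x t) (pi t i) - fine (fstar i (pi t i)))
             + K) / wsum.
have fiB : (\sum_(i < m) (p i 0)%:E * fi (A i) (Pi i) (fstar i) (xbar w x N) <=
            (\sum_(i < m) p i 0 * B i)%:E)%E.
  rewrite -sumEFin; apply: lee_sum => i _; rewrite EFinM; apply: lee_wpmul2l.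
    by rewrite lee_fin.
  by rewrite /B /K addrA; apply: fi_xbar_le.
apply: le_trans (leeD2r _ fiB) _; rewrite -(fineK rhop) -EFinB lee_fin.
have -> : \sum_(i < m) p i 0 * B i = (\sum_(1 <= t < N.+1) w t * lin t p (x t) + K) / wsum.
  rewrite /B /lin; under eq_bigr do rewrite mulrDl mulrDr.
  rewrite big_split /= -mulr_suml p1 mul1r [RHS]mulrDl; congr (_ + _).
  under eq_bigr do rewrite mulrA; rewrite -mulr_suml; congr (_ / wsum).
  under eq_bigr do rewrite mulr_sumr; rewrite exchange_big /=; apply: eq_bigr => t _.
  rewrite mulr_sumr; apply: eq_bigr => i _; rewrite dotv_mulmxl; ring.
have lin_le : forall t, (1 <= t <= N)%N ->
    lin t p (x t) - fine (rho p) <= fine (lin_sup t (x t)).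
  by move=> t tN; have [Sxt _ _ _] := x_three_point tN; apply: affine_sup_le.
have sum_lin_le : \sum_(1 <= t < N.+1) w t * lin t p (x t) - fine (rho p) * wsum <=
              \sum_(1 <= t < N.+1) w t * fine (lin_sup t (x t)).
  rewrite /wsum mulr_sumr -sumrB big_nat_cond [leRHS]big_nat_cond.
  apply: ler_sum => t /andP[tN _]; rewrite [fine _ * _]mulrC -mulrBr.
  by apply: ler_wpM2l; [exact: ltW (w0 _ tN) | exact: lin_le].
have -> : (\sum_(1 <= t < N.+1) w t * lin t p (x t) + K) / wsum - fine (rho p) =
          (\sum_(1 <= t < N.+1) w t * lin t p (x t) - fine (rho p) * wsum + K) / wsum.
  by field; rewrite gt_eqF ?wsum_gt0.
by rewrite ler_pM2r ?invr_gt0 ?wsum_gt0 // /K; lra.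
Qed.

Theorem DRAO_ns_rate :
  (fobj A Pi fstar P rho u (xbar w x N) <= fobj A Pi fstar P rho u xs +
    ((w 1 * eta 1 / 2 * norm2 (x 0 - xs) ^+ 2 + ctau / 2 * DPi ^+ 2) / wsum)%:E)%E.
Proof.
have uxt t : (1 <= t <= N)%N -> u (x t) \is a fin_num by case/x_three_point.
have := convex_xbar uNy (strongly_convex_finW (lexx 0) alpha0 usc) N0 w0 uxt.
move=> /(leeD sup_part_xbar_le) /le_trans; apply.
rewrite -EFinD -(fineK fxs) -EFinD lee_fin sqr_norm2.
have model_xs_le :
    \sum_(1 <= t < N.+1) w t * model t xs <= wsum * fine (fobj A Pi fstar P rho u xs).
  rewrite /wsum mulr_suml big_nat_cond [leRHS]big_nat_cond; apply: ler_sum => t /andP[tN _].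
  apply: ler_wpM2l; first exact: ltW (w0 _ tN).
  rewrite /model /fobj fineD ?sup_part_xs_fin ?u_xs_fin // lerD2r.
  have [_ _ Sxs _] := x_three_point tN.
  by apply: fine_le => //; [exact: sup_part_xs_fin | exact: lin_sup_le_sup_part].
have := primal_regret.
have -> : \sum_(1 <= t < N.+1) w t * (model t (x t) - model t xs) =
    \sum_(1 <= t < N.+1) w t * fine (lin_sup t (x t)) + \sum_(1 <= t < N.+1) w t * fine (u (x t))
    - \sum_(1 <= t < N.+1) w t * model t xs.
  by rewrite -big_split -sumrB; apply: eq_bigr => t _; rewrite /model /=; ring.
rewrite -/wsum; set SS := \sum_(1 <= t < N.+1) _; set SU := \sum_(1 <= t < N.+1) _.
set F := fine (fobj _ _ _ _ _ _ _) in model_xs_le *.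
set Q := w 1 * eta 1 / 2 * _; set c := ctau / 2 * _.
have W0 := wsum_gt0.
have -> : (SS + c + drift) / wsum + SU / wsum = (SS + SU + drift + c) / wsum.
  by field; rewrite gt_eqF.
have -> : F + (Q + c) / wsum = (F * wsum + Q + c) / wsum by field; rewrite gt_eqF.
by rewrite ler_pM2r ?invr_gt0 //; lra.
Qed.

End Run.

Lemma DRAO_ns_rate_convex (R0 : R) : 0 < R0 ->
  forall (N : nat) (x : nat -> 'cV[R]_n) (pi : nat -> forall i, 'cV[R]_(mi i)),
  (0 < N)%N -> norm2 (x 0 - xs) <= R0 ->
  DRAO_ns X A Pi fstar P rho u (fun _ => 1) (fun _ => MA * DPi / R0)
          (fun _ => MA * R0 / DPi) N x pi ->
  (fobj A Pi fstar P rho u (xbar (fun _ => 1%R) x N)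
     <= fobj A Pi fstar P rho u xs + (MA * DPi * R0 / N%:R)%:E)%E.
Proof.
move=> R00 N x pi N0 x0R0 run.
have DPi0 := DPi_ge0.
have ctau0 : 0 <= MA * R0 / DPi by rewrite divr_ge0 ?mulr_ge0 ?MA_ge0 // ltW.
have eta0 : 0 <= MA * DPi / R0 by rewrite divr_ge0 ?mulr_ge0 ?MA_ge0 // ltW.
apply: le_trans (DRAO_ns_rate N0 ctau0 _ _ _ _ _ _ run) _ => //.
- by move=> *; rewrite mul1r.
- by move=> *; rewrite mulr1.
- move=> *; have [|DPin0] := eqVneq DPi 0; [by left | right].
  by rewrite mul1r le_eqVlt; apply/orP; left; apply/eqP; field; rewrite DPin0 gt_eqF.
- by move=> *; rewrite !mul1r lerDl.
apply: leeD2l; rewrite lee_fin sumr_const_nat subn1 /= ler_pM2r ?invr_gt0 ?ltr0n // mul1r.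
have init : MA * DPi / R0 / 2 * norm2 (x 0 - xs) ^+ 2 <= MA * DPi * R0 / 2.
  have R0n : 0 <= R0 := ltW R00.
  have sqr_x0 : norm2 (x 0 - xs) ^+ 2 <= R0 ^+ 2 by rewrite ler_pXn2r ?nnegrE ?norm2_ge0.
  apply: le_trans (ler_wpM2l _ sqr_x0) _; first by rewrite divr_ge0.
  by rewrite le_eqVlt; apply/orP; left; apply/eqP; field; rewrite gt_eqF.
have dual : MA * R0 / DPi / 2 * DPi ^+ 2 <= MA * DPi * R0 / 2.
  have [->|DPin0] := eqVneq DPi 0; first by rewrite expr0n /= !mulr0 mul0r.
  by rewrite le_eqVlt; apply/orP; left; apply/eqP; field.
lra.
Qed.

Lemma DRAO_ns_rate_strongly_convex : 0 < alpha ->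
  forall (N : nat) (x : nat -> 'cV[R]_n) (pi : nat -> forall i, 'cV[R]_(mi i)),
  (0 < N)%N ->
  DRAO_ns X A Pi fstar P rho u (fun t => (t%:R - 1) / t%:R)
          (fun t => t%:R * alpha / 3) (fun t => 3 * MA ^+ 2 / (t%:R * alpha)) N x pi ->
  (fobj A Pi fstar P rho u (xbar (fun t => t%:R%R) x N)
     <= fobj A Pi fstar P rho u xs
        + ((alpha * norm2 (x 0 - xs) ^+ 2 / 3 + 3 * MA ^+ 2 * DPi ^+ 2 / alpha)
           / (N%:R ^+ 2))%:E)%E.
Proof.
move=> alpha_gt0 N x pi N0 run.
have ctau0 : 0 <= 3 * MA ^+ 2 / alpha.
  exact: divr_ge0 (mulr_ge0 (ler0n _ 3) (sqr_ge0 _)) (ltW alpha_gt0).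
have t_gt0 t : (1 <= t <= N)%N -> (0 : R) < t%:R by rewrite ltr0n; lia.
apply: le_trans (DRAO_ns_rate N0 ctau0 t_gt0 _ _ _ _ _ run) _.
- by move=> t /t_gt0 t0; rewrite divr_ge0 ?mulr_ge0 // ltW.
- by move=> t /t_gt0 t0; field; rewrite !gt_eqF.
- by move=> t _; rewrite -natr1; field; rewrite natr1 pnatr_eq0.
- move=> t /t_gt0 t0; right; rewrite le_eqVlt; apply/orP; left; apply/eqP.
  by field; rewrite gt_eqF.
- move=> t /andP[t1 _]; rewrite -natr1 -subr_ge0.
  have -> : t%:R * (t%:R * alpha / 3 + alpha) - (t%:R + 1) * ((t%:R + 1) * alpha / 3) =
            alpha / 3 * (t%:R - 1) :> R by field.
  by rewrite mulr_ge0 ?divr_ge0 ?subr_ge0 ?ler1n // ltW.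
apply: leeD2l; rewrite lee_fin.
set Z := alpha * _ / 3 + _; set W := \sum_(1 <= t < N.+1) _.
have N_gt0 : (0 : R) < N%:R by rewrite ltr0n.
have W2 : W *+ 2 = N%:R * N.+1%:R := gauss_sumr R N.
have W0 : 0 < W by rewrite -(pmulrn_lgt0 _ (isT : (0 < 2)%N)) W2 mulr_gt0 ?ltr0n.
have Z0 : 0 <= Z.
  apply: addr_ge0; apply: divr_ge0 => //.
  - exact: mulr_ge0 alpha0 (sqr_ge0 _).
  - exact: mulr_ge0 (mulr_ge0 (ler0n _ 3) (sqr_ge0 _)) (sqr_ge0 _).
have -> : (1 * (1 * alpha / 3) / 2 * norm2 (x 0 - xs) ^+ 2
           + 3 * MA ^+ 2 / alpha / 2 * DPi ^+ 2) / W = Z / (W *+ 2).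
  by rewrite /Z mulr2n; field; rewrite !gt_eqF ?addr_gt0.
rewrite W2 ler_wpM2l // lef_pV2 ?posrE ?exprn_gt0 ?mulr_gt0 ?ltr0n //.
by rewrite expr2 ler_wpM2l ?ler_nat // ltW.
Qed.

End DRAO.

Lemma proper_restrict_fun (R : realType) k (P : set 'cV[R]_k) (rho : 'cV[R]_k -> \bar R) :
  proper_fun (restrict_fun P rho) ->
  (forall p, P p -> (rho p != -oo)%E) /\ exists2 p, P p & rho p \is a fin_num.
Proof.
rewrite /restrict_fun => -[rhoNy [p rhop]]; split=> [q Pq|].
  by have := rhoNy q; rewrite asboolT.
by move: rhop; case: (asboolP (P p)) => // Pp rhop; exists p.
Qed.

Theorem theorem3p3 (R : realType) (n m : nat) (mi : 'I_m -> nat)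
  (X : set 'cV[R]_n) (P : set 'cV[R]_m) (rho : 'cV[R]_m -> \bar R)
  (u : 'cV[R]_n -> \bar R) (alpha : R)
  (A : forall i, 'M[R]_(mi i, n)) (Pi : forall i, set 'cV[R]_(mi i))
  (fstar : forall i, 'cV[R]_(mi i) -> \bar R)
  (xs : 'cV[R]_n) (R0 : R) :
  closed X -> convex_set X ->
  closed P -> convex_set P -> P `<=` @simplex R m ->
  pcc (restrict_fun P rho) ->
  pcc u -> 0 <= alpha -> strongly_convex alpha u ->
  (forall i, [/\ closed (Pi i), convex_set (Pi i) & bounded_set2 (Pi i)]) ->
  (forall i, pcc (fstar i)) ->
  (forall i, exists q, Pi i q /\ fstar i q \is a fin_num) ->
  X xs -> fobj A Pi fstar P rho u xs \is a fin_num ->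
  (forall y, X y -> (fobj A Pi fstar P rho u xs <= fobj A Pi fstar P rho u y)%E) ->
  let MA := \big[Num.max/0]_(i < m) opnorm (A i) in
  let DPi := \big[Num.max/0]_(i < m) diam (Pi i) in
  (* (a) *)
  (alpha = 0 -> 0 < R0 ->
   forall (N : nat) (x : nat -> 'cV[R]_n) (pi : nat -> forall i, 'cV[R]_(mi i)),
   (0 < N)%N -> norm2 (x 0%N - xs) <= R0 ->
   DRAO_ns X A Pi fstar P rho u (fun _ => 1) (fun _ => MA * DPi / R0)
           (fun _ => MA * R0 / DPi) N x pi ->
   (fobj A Pi fstar P rho u (xbar (fun _ => 1%R) x N)
      <= fobj A Pi fstar P rho u xs + (MA * DPi * R0 / N%:R)%:E)%E) /\
  (* (b) *)
  (0 < alpha ->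
   forall (N : nat) (x : nat -> 'cV[R]_n) (pi : nat -> forall i, 'cV[R]_(mi i)),
   (0 < N)%N -> norm2 (x 0%N - xs) <= R0 ->
   DRAO_ns X A Pi fstar P rho u (fun t => (t%:R - 1) / t%:R)
           (fun t => t%:R * alpha / 3) (fun t => 3 * MA ^+ 2 / (t%:R * alpha)) N x pi ->
   (fobj A Pi fstar P rho u (xbar (fun t => t%:R%R) x N)
      <= fobj A Pi fstar P rho u xs
         + ((alpha * norm2 (x 0%N - xs) ^+ 2 / 3 + 3 * MA ^+ 2 * DPi ^+ 2 / alpha)
            / (N%:R ^+ 2))%:E)%E).
Proof.
move=> _ cX _ _ PS [/proper_restrict_fun[rhoNy rho_fin] _ _] [[uNy _] _ _] alpha0 usc.
move=> HPi Hfs fs_fin Xxs fxs _ MA DPi.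
have cPi i : convex_set (Pi i) by case: (HPi i).
have bPi i : bounded_set2 (Pi i) by case: (HPi i).
have fsNy i : forall q, (fstar i q != -oo)%E by case: (Hfs i) => -[].
have fscvx i : convex_fun (fstar i) by case: (Hfs i).
have usc' := strongly_convex_to_fin uNy usc.
have rate_a := DRAO_ns_rate_convex cX PS rhoNy rho_fin uNy alpha0 usc' cPi bPi fsNy fscvx
  fs_fin Xxs fxs.
have rate_b := DRAO_ns_rate_strongly_convex cX PS rhoNy rho_fin uNy alpha0 usc' cPi bPi fsNy
  fscvx fs_fin Xxs fxs.
by split=> [_ R0_gt0 N x pi N0 x0R0|alpha_gt0 N x pi N0 _]; [apply: rate_a | apply: rate_b].
Qed.
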